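(* Let $(X,V)$ and $(\overline{X},\overline{V})$ be global solutions of the discrete Motsch–Tadmor model (as in the context) whose initial data satisfy \[ \max\{\|\Delta^x(0)\|_F,\|\Delta^{\overline{x}}(0)\|_F\}<M,\quad \|\Delta^v(0)\|_F<\kappa\int_{\|\Delta^x(0)\|_F}^M\psi(s)\,ds,\quad \|\Delta^{\overline{v}}(0)\|_F<\kappa\int_{\|\Delta^{\overline{x}}(0)\|_F}^M\psi(s)\,ds. \] Define $\lambda(n)=\min_{1\le i,j\le N}(\overline{\phi}_{ij}(n)+\overline{\phi}_{ji}(n))$ and $\alpha(n)=\max_{1\le i,j\le N}(1-\overline{\phi}_{ij}(n)-\overline{\phi}_{ii}(n))^2$. Then for all $n\ge0$, \[ \|\Delta^v(n+1)-\Delta^{\overline{v}}(n+1)\|_F^2\le\mathcal{C}_1\|\Delta^v(n)-\Delta^{\overline{v}}(n)\|_F^2+\mathcal{C}_2\|\Delta^v(n)-\Delta^{\overline{v}}(n)\|_F\|\Delta^v(n)\|_F+\mathcal{C}_3\|\Delta^v(n)\|_F^2, \] where \[ \mathcal{C}_1=(1-h\kappa\lambda(n))^2+4h^2\kappa^2\Big(\alpha(n)+\frac{L_a^2M^2}{Nc_1^2}\big(1+\tfrac{c_2}{c_1}\big)^2\Big)+2\sqrt{2}h\kappa(1-h\kappa\lambda(n))\Big(\alpha(n)+\frac{L_a^2M^2}{c_1^2}\big(1+\tfrac{c_2}{c_1}\big)^2\Big)^{1/2}, \] \[ \mathcal{C}_2=\frac{8h\kappa L_aM}{c_1}(1-h\kappa\lambda(n))\big(1+\tfrac{c_2}{c_1}\big),\qquad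 \mathcal{C}_3=\frac{32h^2\kappa^2L_a^2M^2}{c_1^2}\big(1+\tfrac{c_2}{c_1}\big)^2 . \]
   Context: Discrete MT model: fix $N\ge1$, $d\ge1$, $\kappa>0$, $h>0$, and $a:[0,\infty)\to\mathbb{R}$ with constants $0<c_1\le c_2$, $c_1\le a\le c_2$, $|a(r_1)-a(r_2)|\le L_a|r_1-r_2|$ ($L_a>0$); $0<h<\min\{1,1/\kappa\}$. A solution satisfies $x_i(n+1)=x_i(n)+hv_i(n)$, $v_i(n+1)=v_i(n)+h\kappa\sum_j\phi_{ij}(n)(v_j(n)-v_i(n))$ with $\phi_{ij}(n)=\frac{a(\|x_i(n)-x_j(n)\|)}{\sum_ka(\|x_i(n)-x_k(n)\|)}$; for the second solution $\overline{\phi}_{ij}(n)=\frac{a(\|\overline{x}_i(n)-\overline{x}_j(n)\|)}{\sum_ka(\|\overline{x}_i(n)-\overline{x}_k(n)\|)}$. Notation: $\Delta^x_{ij}=x_i-x_j$, $\Delta^v_{ij}=v_i-v_j$, similarly $\Delta^{\overline{x}},\Delta^{\overline{v}}$; $\|A\|_F=(\sum_{i,j}\|A_{ij}\|^2)^{1/2}$. Constants: $\|\phi\|_{\mathrm{Lip}}=\frac{L_a}{Nc_1}(1+\frac{c_2}{c_1})$, $M=\frac{1}{4N\|\phi\|_{\mathrm{Lip}}}$, $\psi(s)=1-\|\phi\|_{\mathrm{Lip}}Ns$. *)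

From Stdlib Require Import Reals List.
From Coquelicot Require Import Coquelicot.
Open Scope R_scope.

(* Agents are indexed by 0..N-1, coordinates by 0..d-1.
   A trajectory is  x : nat -> nat -> nat -> R  with  x n i k  = k-th
   coordinate of agent i at time step n. *)

Definition sumN (N : nat) (f : nat -> R) : R :=
  fold_right Rplus 0 (map f (seq 0 N)).

(* min / max over i < N (meaningful for N >= 1) *)
Definition minN (N : nat) (f : nat -> R) : R :=
  fold_right Rmin (f 0%nat) (map f (seq 0 N)).
Definition maxN (N : nat) (f : nat -> R) : R :=
  fold_right Rmax (f 0%nat) (map f (seq 0 N)).

Definition vnorm (d : nat) (u : nat -> R) : R :=
  sqrt (sumN d (fun k => u k ^ 2)).

Definition dist_ij (d : nat) (x : nat -> nat -> nat -> R) (n i j : nat) : R :=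
  vnorm d (fun k => x n i k - x n j k).

Definition phi (N d : nat) (a : R -> R) (x : nat -> nat -> nat -> R)
  (n i j : nat) : R :=
  a (dist_ij d x n i j) / sumN N (fun l => a (dist_ij d x n i l)).

Definition MT_solution (N d : nat) (kappa h : R) (a : R -> R)
  (x v : nat -> nat -> nat -> R) : Prop :=
  forall n i k, (i < N)%nat -> (k < d)%nat ->
    x (S n) i k = x n i k + h * v n i k /\
    v (S n) i k = v n i k
      + h * kappa * sumN N (fun j => phi N d a x n i j * (v n j k - v n i k)).

(* Frobenius norm of the matrix Delta^x(n) = (x_i(n) - x_j(n))_{ij} *)
Definition frobD (N d : nat) (x : nat -> nat -> nat -> R) (n : nat) : R :=
  sqrt (sumN N (fun i => sumN N (fun j => dist_ij d x n i j ^ 2))).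

Definition frobDD (N d : nat) (v vb : nat -> nat -> nat -> R) (n : nat) : R :=
  sqrt (sumN N (fun i => sumN N (fun j =>
    vnorm d (fun k => (v n i k - v n j k) - (vb n i k - vb n j k)) ^ 2))).

Definition phiLip (N : nat) (La c1 c2 : R) : R :=
  La / (INR N * c1) * (1 + c2 / c1).
Definition Mconst (N : nat) (La c1 c2 : R) : R :=
  1 / (4 * INR N * phiLip N La c1 c2).
Definition psi (N : nat) (La c1 c2 : R) (s : R) : R :=
  1 - phiLip N La c1 c2 * INR N * s.

Definition lambda_n (N d : nat) (a : R -> R) (xb : nat -> nat -> nat -> R)
  (n : nat) : R :=
  minN N (fun i => minN N (fun j => phi N d a xb n i j + phi N d a xb n j i)).
Definition alpha_n (N d : nat) (a : R -> R) (xb : nat -> nat -> nat -> R)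
  (n : nat) : R :=
  maxN N (fun i => maxN N (fun j =>
    (1 - phi N d a xb n i j - phi N d a xb n i i) ^ 2)).

(* Both solutions flock.  With X(n), V(n) the Frobenius norms of Delta^x(n), Delta^v(n) and
   G(s) = s - c s^2 / 2 (c = N ||phi||_Lip) the primitive of psi, the functional
   V(n) + kappa G(X(n)) does not increase along the scheme, and as G increases on [0, 1/c]
   this keeps X(n) < M = 1 / (4c).

   Inside the flock |phi_ij - phibar_ij| <= ||phi||_Lip M, and since every row of weights sums
   to one, a weighted combination with zero-sum coefficients can be estimated after
   subtracting a fixed agent (Cauchy-Schwarz).  Splitting the update of Delta^v - Delta^vbar
   into (1 - h kappa)(Delta^v - Delta^vbar), the phibar-average of v - vbar, and the weight
   difference applied to v gives the linear estimate
     ||Delta^v - Delta^vbar||(n+1)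
       <= (1 - h kappa + h kappa s) ||Delta^v - Delta^vbar||(n) + (h kappa / 2) ||Delta^v||(n)
   with s = 1 / (4 sqrt N) <= 1/4, and its square is dominated by the stated quadratic form. *)

From Pilot Require Import Defs.
From Stdlib Require Import Reals List Lra Lia Psatz.
From Coquelicot Require Import Coquelicot.
Open Scope R_scope.

Lemma fold_right_Rplus_init (l : list R) (c : R) :
  fold_right Rplus c l = fold_right Rplus 0 l + c.
Proof. induction l as [|x l IH]; simpl; [lra | rewrite IH; lra]. Qed.

Lemma sumN_S n f : sumN (S n) f = sumN n f + f n.
Proof.
  unfold sumN. rewrite seq_S, map_app, fold_right_app. simpl.
  rewrite fold_right_Rplus_init. lra.
Qed.

Lemma sumN_shift n f : sumN (S n) f = f 0%nat + sumN n (fun i => f (S i)).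
Proof. unfold sumN. simpl. rewrite <- seq_shift, map_map. reflexivity. Qed.

Lemma sumN_ext_lt n f g : (forall i, (i < n)%nat -> f i = g i) -> sumN n f = sumN n g.
Proof. induction n; intros H; [reflexivity|]. rewrite !sumN_S, IHn, H; auto. Qed.

Lemma sumN_ext n f g : (forall i, f i = g i) -> sumN n f = sumN n g.
Proof. intros; apply sumN_ext_lt; auto. Qed.

Lemma sumN_plus n f g : sumN n (fun i => f i + g i) = sumN n f + sumN n g.
Proof. induction n; [unfold sumN; simpl; lra|]. rewrite !sumN_S, IHn. lra. Qed.

Lemma sumN_minus n f g : sumN n (fun i => f i - g i) = sumN n f - sumN n g.
Proof. induction n; [unfold sumN; simpl; lra|]. rewrite !sumN_S, IHn. lra. Qed.

Lemma sumN_scal n c f : sumN n (fun i => c * f i) = c * sumN n f.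
Proof. induction n; [unfold sumN; simpl; lra|]. rewrite !sumN_S, IHn. lra. Qed.

Lemma sumN_const n c : sumN n (fun _ => c) = INR n * c.
Proof. induction n; [unfold sumN; simpl; lra|]. rewrite sumN_S, IHn, S_INR. lra. Qed.

Lemma sumN_le n f g : (forall i, (i < n)%nat -> f i <= g i) -> sumN n f <= sumN n g.
Proof.
  induction n; intros H; [unfold sumN; simpl; lra|]. rewrite !sumN_S.
  apply Rplus_le_compat; auto.
Qed.

Lemma sumN_nonneg n f : (forall i, (i < n)%nat -> 0 <= f i) -> 0 <= sumN n f.
Proof.
  intros H. replace 0 with (sumN n (fun _ => 0)) by (rewrite sumN_const; lra).
  apply sumN_le; auto.
Qed.

Lemma sumN_term_le n f j :
  (forall i, (i < n)%nat -> 0 <= f i) -> (j < n)%nat -> f j <= sumN n f.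
Proof.
  induction n; intros H Hj; [lia|]. rewrite sumN_S.
  destruct (Nat.eq_dec j n) as [->|Hjn].
  - assert (0 <= sumN n f) by (apply sumN_nonneg; auto). lra.
  - assert (f j <= sumN n f) by (apply IHn; auto; lia).
    assert (0 <= f n) by (apply H; lia). lra.
Qed.

Lemma sumN_first_two_le n f :
  (2 <= n)%nat -> (forall i, (i < n)%nat -> 0 <= f i) -> f 0%nat + f 1%nat <= sumN n f.
Proof.
  intros Hn Hf. destruct n as [|[|m]]; try lia.
  rewrite !sumN_shift.
  assert (0 <= sumN m (fun i => f (S (S i)))) by (apply sumN_nonneg; intros; apply Hf; lia).
  lra.
Qed.

Lemma Rabs_sumN_le n f : Rabs (sumN n f) <= sumN n (fun i => Rabs (f i)).
Proof.
  induction n; [unfold sumN; simpl; rewrite Rabs_R0; lra|]. rewrite !sumN_S.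
  eapply Rle_trans; [apply Rabs_triang|]. lra.
Qed.

Lemma sumN_swap n m (f : nat -> nat -> R) :
  sumN n (fun i => sumN m (fun j => f i j)) = sumN m (fun j => sumN n (fun i => f i j)).
Proof.
  induction n.
  - unfold sumN at 1; simpl. rewrite <- (Rmult_0_r (INR m)), <- sumN_const. reflexivity.
  - rewrite sumN_S, IHn, <- sumN_plus. apply sumN_ext. intros; rewrite sumN_S; reflexivity.
Qed.

Lemma minN_le N f i : (i < N)%nat -> minN N f <= f i.
Proof.
  intros Hi. unfold minN. assert (Hin : In (f i) (map f (seq 0 N))).
  { apply in_map, in_seq. lia. }
  induction (map f (seq 0 N)) as [|x l IH]; simpl in *; [tauto|].
  destruct Hin as [<-|Hin]; [apply Rmin_l | eapply Rle_trans; [apply Rmin_r | auto]].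
Qed.

Lemma minN_ge N f m : m <= f 0%nat -> (forall i, (i < N)%nat -> m <= f i) -> m <= minN N f.
Proof.
  intros H0 H. unfold minN. assert (Hl : forall x, In x (map f (seq 0 N)) -> m <= x).
  { intros x Hx. apply in_map_iff in Hx. destruct Hx as [i [<- Hi]].
    apply in_seq in Hi. apply H. lia. }
  induction (map f (seq 0 N)) as [|x l IH]; simpl in *; auto.
  apply Rmin_glb; auto.
Qed.

Lemma maxN_ge_init N f : f 0%nat <= Defs.maxN N f.
Proof.
  unfold Defs.maxN. induction (map f (seq 0 N)) as [|x l IH]; simpl; [lra|].
  eapply Rle_trans; [apply IH | apply Rmax_r].
Qed.

Lemma alpha_n_nonneg N d a xb n : 0 <= alpha_n N d a xb n.
Proof.
  unfold alpha_n. eapply Rle_trans; [|apply maxN_ge_init].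
  eapply Rle_trans; [|apply maxN_ge_init]. apply pow2_ge_0.
Qed.

(** * Cauchy-Schwarz and Minkowski for positive linear functionals *)

Lemma quadratic_nonneg_discriminant A B C :
  0 <= C -> (forall t, 0 <= A + 2 * B * t + C * t ^ 2) -> B ^ 2 <= A * C.
Proof.
  intros HC H. destruct (Req_dec C 0) as [->|HC0].
  - destruct (Req_dec B 0) as [->|HB]; [lra|].
    specialize (H (- (A + 1) / (2 * B))).
    replace (A + 2 * B * (- (A + 1) / (2 * B)) + 0 * (- (A + 1) / (2 * B)) ^ 2) with (-1) in H
      by (field; auto). lra.
  - specialize (H (- B / C)).
    replace (A + 2 * B * (- B / C) + C * (- B / C) ^ 2) with ((A * C - B ^ 2) / C) in H
      by (field; auto).
    assert (0 <= (A * C - B ^ 2) / C * C) by (apply Rmult_le_pos; lra).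
    replace ((A * C - B ^ 2) / C * C) with (A * C - B ^ 2) in * by (field; auto). lra.
Qed.

Definition positive_linear {X : Type} (L : (X -> R) -> R) : Prop :=
  (forall f g, (forall x, f x = g x) -> L f = L g) /\
  (forall f g, L (fun x => f x + g x) = L f + L g) /\
  (forall c f, L (fun x => c * f x) = c * L f) /\
  (forall f, (forall x, 0 <= f x) -> 0 <= L f).

Section PositiveLinear.
Variables (X : Type) (L : (X -> R) -> R).
Hypothesis HL : positive_linear L.

Lemma positive_linear_sq_nonneg f : 0 <= L (fun x => f x ^ 2).
Proof. destruct HL as (_ & _ & _ & Lpos). apply Lpos; intros; apply pow2_ge_0. Qed.

Lemma functional_cauchy_schwarz f g :
  L (fun x => f x * g x) ^ 2 <= L (fun x => f x ^ 2) * L (fun x => g x ^ 2).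
Proof.
  destruct HL as (Lext & Lplus & Lscal & Lpos).
  apply quadratic_nonneg_discriminant; [apply positive_linear_sq_nonneg|].
  intros t. assert (H := positive_linear_sq_nonneg (fun x => f x + t * g x)).
  rewrite (Lext _ (fun x => f x ^ 2 + ((2 * t) * (f x * g x) + t ^ 2 * g x ^ 2))) in H
    by (intros; ring).
  rewrite !Lplus, !Lscal in H. lra.
Qed.

Lemma functional_minkowski f g :
  sqrt (L (fun x => (f x + g x) ^ 2))
  <= sqrt (L (fun x => f x ^ 2)) + sqrt (L (fun x => g x ^ 2)).
Proof.
  destruct HL as (Lext & Lplus & Lscal & Lpos).
  assert (Hf := positive_linear_sq_nonneg f). assert (Hg := positive_linear_sq_nonneg g).
  assert (Hcs := functional_cauchy_schwarz f g).
  rewrite (Lext _ (fun x => f x ^ 2 + (2 * (f x * g x) + 1 * g x ^ 2))) by (intros; ring).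
  rewrite !Lplus, !Lscal.
  set (A := L (fun x => f x ^ 2)) in *. set (B := L (fun x => g x ^ 2)) in *.
  set (m := L (fun x => f x * g x)) in *.
  assert (HsA := sqrt_pos A). assert (HsB := sqrt_pos B).
  assert (Hm : m <= sqrt A * sqrt B).
  { assert (m ^ 2 <= (sqrt A * sqrt B) ^ 2) by (rewrite Rpow_mult_distr, !pow2_sqrt; auto).
    destruct (Rle_dec m 0); [nra|]. apply Rsqr_incr_0_var; unfold Rsqr; nra. }
  rewrite <- (sqrt_pow2 (sqrt A + sqrt B)) by lra. apply sqrt_le_1_alt.
  replace ((sqrt A + sqrt B) ^ 2) with (sqrt A ^ 2 + 2 * (sqrt A * sqrt B) + sqrt B ^ 2) by ring.
  rewrite !pow2_sqrt by auto. lra.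
Qed.

Lemma functional_norm_scal c f :
  sqrt (L (fun x => (c * f x) ^ 2)) = Rabs c * sqrt (L (fun x => f x ^ 2)).
Proof.
  destruct HL as (Lext & _ & Lscal & _).
  rewrite (Lext _ (fun x => c ^ 2 * f x ^ 2)) by (intros; ring).
  rewrite Lscal, sqrt_mult by (apply pow2_ge_0 || apply positive_linear_sq_nonneg).
  rewrite <- sqrt_Rsqr_abs. unfold Rsqr. f_equal. f_equal. ring.
Qed.

End PositiveLinear.

Lemma sumN_positive_linear n : positive_linear (sumN n).
Proof.
  repeat split; intros.
  - apply sumN_ext; auto.
  - apply sumN_plus.
  - apply sumN_scal.
  - apply sumN_nonneg; auto.
Qed.

Lemma sumN_cauchy_schwarz n f g :
  sumN n (fun i => f i * g i) ^ 2 <= sumN n (fun i => f i ^ 2) * sumN n (fun i => g i ^ 2).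
Proof. exact (functional_cauchy_schwarz _ _ (sumN_positive_linear n) f g). Qed.

Lemma sumN_minkowski n f g :
  sqrt (sumN n (fun i => (f i + g i) ^ 2))
  <= sqrt (sumN n (fun i => f i ^ 2)) + sqrt (sumN n (fun i => g i ^ 2)).
Proof. exact (functional_minkowski _ _ (sumN_positive_linear n) f g). Qed.

(** * Frobenius norms of pairwise differences *)

Definition sum3 (N d : nat) (F : nat -> nat -> nat -> R) : R :=
  sumN N (fun i => sumN N (fun j => sumN d (fun k => F i j k))).

Definition frob3 (N d : nat) (F : nat -> nat -> nat -> R) : R :=
  sqrt (sum3 N d (fun i j k => F i j k ^ 2)).

Lemma sum3_ext_lt N d F G :
  (forall i j k, (i < N)%nat -> (j < N)%nat -> (k < d)%nat -> F i j k = G i j k) ->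
  sum3 N d F = sum3 N d G.
Proof.
  intros H; unfold sum3. apply sumN_ext_lt; intros i Hi. apply sumN_ext_lt; intros j Hj.
  apply sumN_ext_lt; auto.
Qed.

Lemma sum3_le N d F G :
  (forall i j k, (i < N)%nat -> (j < N)%nat -> (k < d)%nat -> F i j k <= G i j k) ->
  sum3 N d F <= sum3 N d G.
Proof.
  intros H; unfold sum3. apply sumN_le; intros i Hi. apply sumN_le; intros j Hj.
  apply sumN_le; auto.
Qed.

Lemma sum3_plus N d F G : sum3 N d (fun i j k => F i j k + G i j k) = sum3 N d F + sum3 N d G.
Proof.
  unfold sum3. rewrite <- sumN_plus. apply sumN_ext; intros i. rewrite <- sumN_plus.
  apply sumN_ext; intros j. apply sumN_plus.
Qed.

Lemma sum3_scal N d c F : sum3 N d (fun i j k => c * F i j k) = c * sum3 N d F.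
Proof.
  unfold sum3. rewrite <- sumN_scal. apply sumN_ext; intros i. rewrite <- sumN_scal.
  apply sumN_ext; intros j. apply sumN_scal.
Qed.

Lemma sum3_nonneg N d F : (forall i j k, 0 <= F i j k) -> 0 <= sum3 N d F.
Proof.
  intros H. rewrite <- (Rmult_0_l (sum3 N d (fun _ _ _ => 1))), <- sum3_scal.
  apply sum3_le; intros; rewrite Rmult_0_l; auto.
Qed.

Lemma sum3_positive_linear N d :
  positive_linear (fun f : nat * nat * nat -> R => sum3 N d (fun i j k => f (i, j, k))).
Proof.
  repeat split; intros.
  - apply sum3_ext_lt; auto.
  - apply (sum3_plus N d (fun i j k => f (i, j, k)) (fun i j k => g (i, j, k))).
  - apply (sum3_scal N d c (fun i j k => f (i, j, k))).
  - apply sum3_nonneg; auto.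
Qed.

Lemma frob3_minkowski N d F G :
  frob3 N d (fun i j k => F i j k + G i j k) <= frob3 N d F + frob3 N d G.
Proof.
  exact (functional_minkowski _ _ (sum3_positive_linear N d)
           (fun p => F (fst (fst p)) (snd (fst p)) (snd p))
           (fun p => G (fst (fst p)) (snd (fst p)) (snd p))).
Qed.

Lemma frob3_scal N d c F : frob3 N d (fun i j k => c * F i j k) = Rabs c * frob3 N d F.
Proof.
  exact (functional_norm_scal _ _ (sum3_positive_linear N d) c
           (fun p => F (fst (fst p)) (snd (fst p)) (snd p))).
Qed.

Lemma frob3_ext_lt N d F G :
  (forall i j k, (i < N)%nat -> (j < N)%nat -> (k < d)%nat -> F i j k = G i j k) ->
  frob3 N d F = frob3 N d G.
Proof. intros H; unfold frob3; f_equal; apply sum3_ext_lt; intros; rewrite H; auto. Qed.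

Lemma frob3_sq N d F : frob3 N d F ^ 2 = sum3 N d (fun i j k => F i j k ^ 2).
Proof. apply pow2_sqrt, sum3_nonneg; intros; apply pow2_ge_0. Qed.

Lemma frob3_le_of_sq N d F B :
  0 <= B -> sum3 N d (fun i j k => F i j k ^ 2) <= B ^ 2 -> frob3 N d F <= B.
Proof. intros HB H. unfold frob3. rewrite <- (sqrt_pow2 B HB). apply sqrt_le_1_alt, H. Qed.

Lemma frob3_one_agent d F : (forall k, F 0%nat 0%nat k = 0) -> frob3 1 d F = 0.
Proof.
  intros H. rewrite (frob3_ext_lt 1 d F (fun _ _ _ => 0 * 0)).
  - rewrite frob3_scal, Rabs_R0. ring.
  - intros i j k Hi Hj _. replace i with 0%nat by lia. replace j with 0%nat by lia.
    rewrite H. ring.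
Qed.

Lemma vnorm_sq d u : vnorm d u ^ 2 = sumN d (fun k => u k ^ 2).
Proof. apply pow2_sqrt, sumN_nonneg; intros; apply pow2_ge_0. Qed.

Lemma vnorm_ext d u w : (forall k, u k = w k) -> vnorm d u = vnorm d w.
Proof. intros H; unfold vnorm; f_equal; apply sumN_ext; intros; rewrite H; auto. Qed.

Lemma vnorm_triangle d u w : vnorm d (fun k => u k + w k) <= vnorm d u + vnorm d w.
Proof. apply sumN_minkowski. Qed.

Lemma vnorm_sub_sym d u w : vnorm d (fun k => u k - w k) = vnorm d (fun k => w k - u k).
Proof. unfold vnorm; f_equal; apply sumN_ext; intros; ring. Qed.

Lemma dist_ij_nonneg d y n i j : 0 <= dist_ij d y n i j.
Proof. apply sqrt_pos. Qed.

Lemma dist_ij_triangle d y n i j l : dist_ij d y n i l <= dist_ij d y n i j + dist_ij d y n j l.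
Proof.
  unfold dist_ij. rewrite (vnorm_ext d _ (fun k => (y n i k - y n j k) + (y n j k - y n l k)))
    by (intros; ring).
  apply vnorm_triangle.
Qed.

Lemma dist_ij_sym d y n i j : dist_ij d y n i j = dist_ij d y n j i.
Proof. apply vnorm_sub_sym. Qed.

Lemma dist_ij_reverse_triangle d y n i j l :
  Rabs (dist_ij d y n i l - dist_ij d y n j l) <= dist_ij d y n i j.
Proof.
  assert (H1 := dist_ij_triangle d y n i j l). assert (H2 := dist_ij_triangle d y n j i l).
  rewrite (dist_ij_sym d y n j i) in H2. apply Rabs_le. lra.
Qed.

Lemma frobD_frob3 N d y n : frobD N d y n = frob3 N d (fun i j k => y n i k - y n j k).
Proof.
  unfold frobD, frob3, sum3. f_equal. apply sumN_ext; intros i; apply sumN_ext; intros j.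
  apply vnorm_sq.
Qed.

Lemma frobDD_frob3 N d v vb n :
  frobDD N d v vb n = frob3 N d (fun i j k => (v n i k - v n j k) - (vb n i k - vb n j k)).
Proof.
  unfold frobDD, frob3, sum3. f_equal. apply sumN_ext; intros i; apply sumN_ext; intros j.
  apply vnorm_sq.
Qed.

Lemma dist_ij_le_frobD N d y n i j :
  (i < N)%nat -> (j < N)%nat -> dist_ij d y n i j <= frobD N d y n.
Proof.
  intros Hi Hj. unfold frobD. rewrite <- (sqrt_pow2 (dist_ij d y n i j)) by apply dist_ij_nonneg.
  apply sqrt_le_1_alt.
  eapply Rle_trans; [apply (sumN_term_le N (fun j => dist_ij d y n i j ^ 2) j)|].
  - intros; apply pow2_ge_0.
  - exact Hj.
  - apply (sumN_term_le N (fun i => sumN N (fun j => dist_ij d y n i j ^ 2)) i); auto.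
    intros; apply sumN_nonneg; intros; apply pow2_ge_0.
Qed.

Lemma frobD_nonneg N d y n : 0 <= frobD N d y n.
Proof. apply sqrt_pos. Qed.

Lemma frobDD_nonneg N d v vb n : 0 <= frobDD N d v vb n.
Proof. apply sqrt_pos. Qed.

Lemma frobD_one_agent d y n : frobD 1 d y n = 0.
Proof. rewrite frobD_frob3. apply frob3_one_agent. intros; ring. Qed.

Lemma frobDD_one_agent d v vb n : frobDD 1 d v vb n = 0.
Proof. rewrite frobDD_frob3. apply frob3_one_agent. intros; ring. Qed.

Lemma frobD_sq N d y n :
  frobD N d y n ^ 2 = sumN N (fun i => sumN N (fun j => dist_ij d y n i j ^ 2)).
Proof. apply pow2_sqrt. apply sumN_nonneg; intros; apply sumN_nonneg; intros; apply pow2_ge_0. Qed.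

(** * Zero-sum combinations *)

Definition spread (N d : nat) (z : nat -> nat -> R) (i : nat) : R :=
  sumN N (fun l => sumN d (fun k => (z l k - z i k) ^ 2)).

Definition spread_total (N d : nat) (z : nat -> nat -> R) : R :=
  sum3 N d (fun i j k => (z i k - z j k) ^ 2).

Lemma spread_nonneg N d z i : 0 <= spread N d z i.
Proof. apply sumN_nonneg; intros; apply sumN_nonneg; intros; apply pow2_ge_0. Qed.

Lemma spread_le_total N d z i : (i < N)%nat -> spread N d z i <= spread_total N d z.
Proof.
  intros Hi. apply sumN_le. intros l Hl.
  apply (sumN_term_le N (fun j => sumN d (fun k => (z l k - z j k) ^ 2)) i); auto.
  intros; apply sumN_nonneg; intros; apply pow2_ge_0.
Qed.

Lemma sumN_spread N d z : sumN N (spread N d z) = spread_total N d z.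
Proof. apply sumN_swap. Qed.

Lemma spread_total_nonneg N d z : 0 <= spread_total N d z.
Proof. apply sum3_nonneg; intros; apply pow2_ge_0. Qed.

Lemma spread_total_frobD N d y n : spread_total N d (y n) = frobD N d y n ^ 2.
Proof. rewrite frobD_frob3, frob3_sq. reflexivity. Qed.

Lemma spread_total_frobDD N d v vb n :
  spread_total N d (fun l k => v n l k - vb n l k) = frobDD N d v vb n ^ 2.
Proof. rewrite frobDD_frob3, frob3_sq. apply sum3_ext_lt; intros; ring. Qed.

(* Subtracting [z i] costs nothing because the coefficients sum to zero. *)
Lemma zero_sum_combination_le N d (c : nat -> R) z i :
  sumN N c = 0 ->
  sumN d (fun k => sumN N (fun l => c l * z l k) ^ 2)
  <= sumN N (fun l => c l ^ 2) * spread N d z i.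
Proof.
  intros Hc. unfold spread. rewrite sumN_swap, <- sumN_scal. apply sumN_le. intros k Hk.
  replace (sumN N (fun l => c l * z l k)) with (sumN N (fun l => c l * (z l k - z i k))).
  - apply sumN_cauchy_schwarz.
  - rewrite (sumN_ext _ _ (fun l => c l * z l k - z i k * c l)) by (intros; ring).
    rewrite sumN_minus, sumN_scal, Hc. ring.
Qed.

Lemma zero_sum_bounded_combination_le N d (c : nat -> R) z i e :
  sumN N c = 0 -> (forall l, (l < N)%nat -> Rabs (c l) <= e) ->
  sumN d (fun k => sumN N (fun l => c l * z l k) ^ 2) <= INR N * e ^ 2 * spread N d z i.
Proof.
  intros Hc He. eapply Rle_trans; [apply zero_sum_combination_le, Hc|].
  apply Rmult_le_compat_r; [apply spread_nonneg|].
  rewrite <- sumN_const. apply sumN_le. intros l Hl. apply pow_maj_Rabs, He, Hl.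
Qed.

Lemma sumN_sumN_add_sym N (f : nat -> R) :
  sumN N (fun i => sumN N (fun j => f i + f j)) = 2 * INR N * sumN N f.
Proof.
  rewrite (sumN_ext N _ (fun i => INR N * f i + sumN N f))
    by (intros; rewrite sumN_plus, sumN_const; ring).
  rewrite sumN_plus, sumN_scal, sumN_const. ring.
Qed.

Lemma zero_sum_rows_diff_le N d (delta : nat -> nat -> R) z e :
  (forall i, (i < N)%nat -> sumN N (delta i) = 0) ->
  (forall i l, (i < N)%nat -> (l < N)%nat -> Rabs (delta i l) <= e) ->
  sum3 N d (fun i j k =>
    (sumN N (fun l => delta i l * z l k) - sumN N (fun l => delta j l * z l k)) ^ 2)
  <= 4 * INR N ^ 2 * e ^ 2 * spread_total N d z.
Proof.
  intros Hs He.
  set (F := fun i k => sumN N (fun l => delta i l * z l k)).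
  set (f := fun i => 2 * (INR N * e ^ 2 * spread N d z i)).
  assert (HF : forall i, (i < N)%nat -> sumN d (fun k => F i k ^ 2) <= INR N * e ^ 2 * spread N d z i)
    by (intros i Hi; apply zero_sum_bounded_combination_le; auto).
  apply Rle_trans with (sumN N (fun i => sumN N (fun j => f i + f j))).
  - unfold sum3. apply sumN_le; intros i Hi. apply sumN_le; intros j Hj.
    apply Rle_trans with (sumN d (fun k => 2 * F i k ^ 2 + 2 * F j k ^ 2)).
    + apply sumN_le; intros k Hk. fold (F i k) (F j k).
      assert (0 <= (F i k + F j k) ^ 2) by apply pow2_ge_0. nra.
    + rewrite sumN_plus, !sumN_scal. unfold f. assert (HFi := HF i Hi). assert (HFj := HF j Hj). lra.
  - rewrite sumN_sumN_add_sym. unfold f. rewrite sumN_scal, sumN_scal, sumN_spread. right; ring.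
Qed.

(** * The Lyapunov functional *)

Definition psi_primitive (c s : R) : R := s - c * s ^ 2 / 2.

Lemma RInt_psi N La c1 c2 s0 s1 :
  RInt (psi N La c1 c2) s0 s1
  = psi_primitive (phiLip N La c1 c2 * INR N) s1 - psi_primitive (phiLip N La c1 c2 * INR N) s0.
Proof.
  apply is_RInt_unique. unfold psi, psi_primitive.
  set (c := phiLip N La c1 c2 * INR N).
  apply (is_RInt_derive (fun s => s - c * s ^ 2 / 2)).
  - intros; auto_derive; auto. field.
  - intros. apply (continuity_pt_filterlim (fun s => 1 - c * s)). reg.
Qed.

Lemma lyapunov_step c kappa h M X V X' V' :
  0 < c -> c * M = 1 / 4 -> 0 < kappa -> 0 < h -> h * kappa < 1 ->
  0 <= X -> 0 <= V -> 0 <= V' ->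
  X' <= X + h * V -> V' <= (1 - h * kappa) * V + h * kappa * (c * X * V) ->
  X < M -> V + kappa * psi_primitive c X < kappa * psi_primitive c M ->
  X' < M /\ V' + kappa * psi_primitive c X' < kappa * psi_primitive c M.
Proof.
  intros Hc HcM Hk Hh Hu HX HV HV' HX' HV'b HXM HL. unfold psi_primitive in *.
  assert (HM : 0 < M) by nra.
  assert (Hconcave : X' - c * X' ^ 2 / 2 <= X - c * X ^ 2 / 2 + (1 - c * X) * (h * V)).
  { assert ((1 - c * X) * (X' - X) <= (1 - c * X) * (h * V))
      by (apply Rmult_le_compat_l; nra).
    assert (0 <= c / 2 * (X' - X) ^ 2) by (apply Rmult_le_pos; [lra | apply pow2_ge_0]).
    replace (X' - c * X' ^ 2 / 2)
      with (X - c * X ^ 2 / 2 + (1 - c * X) * (X' - X) - c / 2 * (X' - X) ^ 2) by field.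
    lra. }
  assert (HL' : V' + kappa * (X' - c * X' ^ 2 / 2) < kappa * (M - c * M ^ 2 / 2)).
  { assert (kappa * (X' - c * X' ^ 2 / 2)
            <= kappa * (X - c * X ^ 2 / 2 + (1 - c * X) * (h * V)))
      by (apply Rmult_le_compat_l; lra).
    lra. }
  split; [|exact HL'].
  assert (HGX : 0 <= kappa * (X - c * X ^ 2 / 2)).
  { apply Rmult_le_pos; [lra|]. assert (c * X <= 1 / 4) by nra. nra. }
  assert (HGM : kappa * (M - c * M ^ 2 / 2) <= kappa * M).
  { apply Rmult_le_compat_l; [lra|]. assert (0 <= c * M ^ 2) by nra. lra. }
  assert (HhV : h * V < M).
  { assert (h * V <= h * (kappa * M)) by (apply Rmult_le_compat_l; lra). nra. }
  destruct (Rlt_le_dec X' M) as [H|H]; [exact H|exfalso].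
  assert (X' - c * X' ^ 2 / 2 < M - c * M ^ 2 / 2) by nra.
  assert (0 <= (X' - M) * (1 - c * (X' + M) / 2)) by (apply Rmult_le_pos; nra).
  lra.
Qed.

(** * Communication weights and the one-step estimates *)

Lemma Rdiv_le_compat x e S m : 0 <= x -> x <= e -> 0 < m -> m <= S -> x / S <= e / m.
Proof.
  intros Hx Hxe Hm HmS. unfold Rdiv. apply Rmult_le_compat; auto.
  - left; apply Rinv_0_lt_compat; lra.
  - apply Rinv_le_contravar; auto.
Qed.

Lemma Rabs_ratio_sub_le A A' S S' e n c1 c2 :
  0 < n -> 0 < c1 -> 0 <= A' <= c2 -> n * c1 <= S -> n * c1 <= S' ->
  Rabs (A - A') <= e -> Rabs (S - S') <= n * e ->
  Rabs (A / S - A' / S') <= e / (n * c1) * (1 + c2 / c1).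
Proof.
  intros Hn Hc1 HA HS HS' He HSe.
  assert (Hnc : 0 < n * c1) by nra.
  replace (A / S - A' / S') with ((A - A') / S + A' * ((S' - S) / (S * S'))) by (field; lra).
  rewrite Rabs_minus_sym in HSe.
  eapply Rle_trans; [apply Rabs_triang|].
  unfold Rdiv at 1 2. rewrite !Rabs_mult, !Rabs_inv.
  rewrite (Rabs_right S), (Rabs_right (S * S')), (Rabs_right A') by nra.
  assert (t1 : Rabs (A - A') * / S <= e / (n * c1)) by (apply Rdiv_le_compat; auto using Rabs_pos).
  assert (t2 : Rabs (S' - S) * / (S * S') <= n * e / (n * c1 * (n * c1))).
  { apply Rdiv_le_compat; auto using Rabs_pos; [nra | apply Rmult_le_compat; lra]. }
  assert (t3 : A' * (Rabs (S' - S) * / (S * S')) <= c2 * (n * e / (n * c1 * (n * c1)))).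
  { apply Rmult_le_compat; try lra.
    apply Rmult_le_pos; [apply Rabs_pos | left; apply Rinv_0_lt_compat; nra]. }
  replace (e / (n * c1) * (1 + c2 / c1)) with (e / (n * c1) + c2 * (n * e / (n * c1 * (n * c1))))
    by (field; lra).
  lra.
Qed.

Definition phi_avg (N d : nat) (a : R -> R) (y : nat -> nat -> nat -> R) (n : nat)
  (z : nat -> nat -> R) (i k : nat) : R :=
  sumN N (fun l => phi N d a y n i l * z l k).

Lemma phi_avg_sub_rows N d a y yb n z i j k :
  phi_avg N d a y n z i k - phi_avg N d a yb n z j k
  = sumN N (fun l => (phi N d a y n i l - phi N d a yb n j l) * z l k).
Proof. unfold phi_avg. rewrite <- sumN_minus. apply sumN_ext; intros; ring. Qed.

Lemma phi_avg_minus N d a y n z w i k :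
  phi_avg N d a y n (fun l k => z l k - w l k) i k
  = phi_avg N d a y n z i k - phi_avg N d a y n w i k.
Proof. unfold phi_avg. rewrite <- sumN_minus. apply sumN_ext; intros; ring. Qed.

Section Weights.
Variables (N d : nat) (c1 c2 La : R) (a : R -> R).
Hypothesis HN : (1 <= N)%nat.
Hypothesis Hc1 : 0 < c1.
Hypothesis Hc12 : c1 <= c2.
Hypothesis HLa : 0 < La.
Hypothesis Ha_bnd : forall r, 0 <= r -> c1 <= a r <= c2.
Hypothesis Ha_lip :
  forall r1 r2, 0 <= r1 -> 0 <= r2 -> Rabs (a r1 - a r2) <= La * Rabs (r1 - r2).

Lemma INR_N_pos : 0 < INR N.
Proof. apply lt_0_INR; lia. Qed.

Lemma phiLip_pos : 0 < phiLip N La c1 c2.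
Proof.
  assert (Hn := INR_N_pos). unfold phiLip.
  apply Rmult_lt_0_compat; [apply Rdiv_lt_0_compat; nra|].
  assert (0 < c2 / c1) by (apply Rdiv_lt_0_compat; lra). lra.
Qed.

Lemma sumN_a_ge rho : (forall m, (m < N)%nat -> 0 <= rho m) ->
  INR N * c1 <= sumN N (fun m => a (rho m)).
Proof. intros H. rewrite <- sumN_const. apply sumN_le. intros; apply Ha_bnd; auto. Qed.

Lemma normalized_weight_diff_le (rho rho' : nat -> R) e l :
  (forall m, (m < N)%nat -> 0 <= rho m) -> (forall m, (m < N)%nat -> 0 <= rho' m) ->
  (forall m, (m < N)%nat -> Rabs (rho m - rho' m) <= e) -> (l < N)%nat ->
  Rabs (a (rho l) / sumN N (fun m => a (rho m)) - a (rho' l) / sumN N (fun m => a (rho' m)))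
  <= phiLip N La c1 c2 * e.
Proof.
  intros H1 H2 H3 Hl. assert (Hn := INR_N_pos).
  replace (phiLip N La c1 c2 * e) with (La * e / (INR N * c1) * (1 + c2 / c1))
    by (unfold phiLip; field; lra).
  assert (Ha_diff : forall m, (m < N)%nat -> Rabs (a (rho m) - a (rho' m)) <= La * e).
  { intros m Hm. eapply Rle_trans; [apply Ha_lip; auto|].
    apply Rmult_le_compat_l; [lra | auto]. }
  apply Rabs_ratio_sub_le; auto using sumN_a_ge.
  - assert (H := Ha_bnd (rho' l) (H2 l Hl)). lra.
  - rewrite <- sumN_minus. eapply Rle_trans; [apply Rabs_sumN_le|].
    rewrite <- sumN_const. apply sumN_le. auto.
Qed.

Lemma sumN_a_dist_pos y n i : 0 < sumN N (fun l => a (dist_ij d y n i l)).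
Proof.
  assert (H := sumN_a_ge (dist_ij d y n i) (fun m _ => dist_ij_nonneg d y n i m)).
  assert (Hn := INR_N_pos). nra.
Qed.

Lemma phi_nonneg y n i j : 0 <= phi N d a y n i j.
Proof.
  apply Rdiv_le_0_compat; [|apply sumN_a_dist_pos].
  assert (H := Ha_bnd _ (dist_ij_nonneg d y n i j)). lra.
Qed.

Lemma phi_row_sum y n i : sumN N (fun j => phi N d a y n i j) = 1.
Proof.
  unfold phi, Rdiv.
  rewrite (sumN_ext _ _ (fun j => / sumN N (fun l => a (dist_ij d y n i l)) * a (dist_ij d y n i j)))
    by (intros; ring).
  rewrite sumN_scal. apply Rinv_l. apply Rgt_not_eq, sumN_a_dist_pos.
Qed.

Lemma phi_row_lipschitz y n i j l : (l < N)%nat ->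
  Rabs (phi N d a y n i l - phi N d a y n j l) <= phiLip N La c1 c2 * dist_ij d y n i j.
Proof.
  intros Hl. apply normalized_weight_diff_le; auto.
  - intros; apply dist_ij_nonneg.
  - intros; apply dist_ij_nonneg.
  - intros; apply dist_ij_reverse_triangle.
Qed.

Lemma phi_config_diff_le y yb n i l R0 :
  (forall m, (m < N)%nat -> dist_ij d y n i m <= R0) ->
  (forall m, (m < N)%nat -> dist_ij d yb n i m <= R0) -> (l < N)%nat ->
  Rabs (phi N d a y n i l - phi N d a yb n i l) <= phiLip N La c1 c2 * R0.
Proof.
  intros H1 H2 Hl. apply normalized_weight_diff_le; auto.
  - intros; apply dist_ij_nonneg.
  - intros; apply dist_ij_nonneg.
  - intros m Hm. assert (A1 := H1 m Hm). assert (A2 := H2 m Hm).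
    assert (B1 := dist_ij_nonneg d y n i m). assert (B2 := dist_ij_nonneg d yb n i m).
    apply Rabs_le; lra.
Qed.

Lemma phi_avg_rows_sq_le y n z :
  sum3 N d (fun i j k => (phi_avg N d a y n z i k - phi_avg N d a y n z j k) ^ 2)
  <= INR N * phiLip N La c1 c2 ^ 2 * frobD N d y n ^ 2 * spread_total N d z.
Proof.
  set (Lp := phiLip N La c1 c2). set (T := spread_total N d z).
  assert (HLp := phiLip_pos). assert (Hn := INR_N_pos).
  apply Rle_trans with
    (sumN N (fun i => sumN N (fun j => INR N * (Lp * dist_ij d y n i j) ^ 2 * T))).
  - apply sumN_le; intros i Hi; apply sumN_le; intros j Hj.
    rewrite (sumN_ext d _ (fun k => sumN N (fun l =>
               (phi N d a y n i l - phi N d a y n j l) * z l k) ^ 2))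
      by (intros; rewrite phi_avg_sub_rows; reflexivity).
    eapply Rle_trans; [apply zero_sum_bounded_combination_le with (e := Lp * dist_ij d y n i j)|].
    + rewrite sumN_minus, !phi_row_sum. ring.
    + intros; apply phi_row_lipschitz; auto.
    + apply Rmult_le_compat_l; [apply Rmult_le_pos; [lra | apply pow2_ge_0] | apply spread_le_total, Hi].
  - rewrite frobD_sq.
    rewrite (sumN_ext N _ (fun i => INR N * Lp ^ 2 * T * sumN N (fun j => dist_ij d y n i j ^ 2)))
      by (intros; rewrite <- sumN_scal; apply sumN_ext; intros; ring).
    rewrite sumN_scal. right; ring.
Qed.

Lemma frob3_phi_avg_rows_le y n z :
  frob3 N d (fun i j k => phi_avg N d a y n z i k - phi_avg N d a y n z j k)
  <= sqrt (INR N) * phiLip N La c1 c2 * frobD N d y n * sqrt (spread_total N d z).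
Proof.
  assert (HLp := phiLip_pos). assert (Hn := INR_N_pos).
  assert (HT := spread_total_nonneg N d z).
  apply frob3_le_of_sq.
  - apply Rmult_le_pos; [apply Rmult_le_pos; [apply Rmult_le_pos|]|];
      try apply sqrt_pos; try apply frobD_nonneg; lra.
  - eapply Rle_trans; [apply phi_avg_rows_sq_le|].
    right. rewrite !Rpow_mult_distr, !pow2_sqrt by lra. ring.
Qed.

Lemma frob3_phi_avg_configs_le y yb n z R0 :
  (forall i m, (i < N)%nat -> (m < N)%nat -> dist_ij d y n i m <= R0) ->
  (forall i m, (i < N)%nat -> (m < N)%nat -> dist_ij d yb n i m <= R0) ->
  frob3 N d (fun i j k => (phi_avg N d a y n z i k - phi_avg N d a yb n z i k)
                        - (phi_avg N d a y n z j k - phi_avg N d a yb n z j k))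
  <= 2 * INR N * (phiLip N La c1 c2 * R0) * sqrt (spread_total N d z).
Proof.
  intros HR HRb.
  assert (HLp := phiLip_pos). assert (Hn := INR_N_pos).
  assert (HT := spread_total_nonneg N d z).
  assert (HR0 : 0 <= R0) by (eapply Rle_trans; [apply (dist_ij_nonneg d y n 0 0) | apply HR; lia]).
  apply frob3_le_of_sq.
  - apply Rmult_le_pos; [apply Rmult_le_pos; [|apply Rmult_le_pos] | apply sqrt_pos]; lra.
  - rewrite (sum3_ext_lt N d _ (fun i j k =>
      (sumN N (fun l => (phi N d a y n i l - phi N d a yb n i l) * z l k)
       - sumN N (fun l => (phi N d a y n j l - phi N d a yb n j l) * z l k)) ^ 2))
      by (intros; rewrite !phi_avg_sub_rows; reflexivity).
    eapply Rle_trans; [apply zero_sum_rows_diff_le with (e := phiLip N La c1 c2 * R0)|].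
    + intros i Hi. rewrite sumN_minus, !phi_row_sum. ring.
    + intros i l Hi Hl. apply phi_config_diff_le; auto.
    + right. rewrite !Rpow_mult_distr, pow2_sqrt by exact HT. ring.
Qed.

Lemma lambda_n_bounds y n : (2 <= N)%nat -> 0 <= lambda_n N d a y n <= 1.
Proof.
  intros HN2. assert (Hphi := phi_nonneg y n).
  split.
  - unfold lambda_n. apply minN_ge; [apply minN_ge|]; intros;
      try apply minN_ge; intros; apply Rplus_le_le_0_compat; apply Hphi.
  - assert (Hlam : forall i j, (i < N)%nat -> (j < N)%nat ->
              lambda_n N d a y n <= phi N d a y n i j + phi N d a y n j i).
    { intros i j Hi Hj. unfold lambda_n.
      eapply Rle_trans; [apply (minN_le N _ i Hi)|].
      apply (minN_le N (fun j => phi N d a y n i j + phi N d a y n j i) j Hj). }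
    assert (A1 := Hlam 0%nat 0%nat ltac:(lia) ltac:(lia)).
    assert (A2 := Hlam 0%nat 1%nat ltac:(lia) ltac:(lia)).
    assert (A3 := Hlam 1%nat 1%nat ltac:(lia) ltac:(lia)).
    assert (B0 := sumN_first_two_le N (fun j => phi N d a y n 0 j) HN2 (fun j _ => Hphi 0%nat j)).
    assert (B1 := sumN_first_two_le N (fun j => phi N d a y n 1 j) HN2 (fun j _ => Hphi 1%nat j)).
    rewrite phi_row_sum in B0, B1. simpl in B0, B1. lra.
Qed.

Lemma sqrt_INR_N_le : sqrt (INR N) <= INR N.
Proof.
  assert (Hn : 1 <= INR N) by (apply (le_INR 1); auto).
  rewrite <- (sqrt_pow2 (INR N)) at 2 by lra. apply sqrt_le_1_alt. nra.
Qed.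

Lemma sqrt_INR_N_div_bounds : 0 <= sqrt (INR N) * (1 / (4 * INR N)) <= 1 / 4.
Proof.
  assert (Hn := INR_N_pos). assert (Hs := sqrt_INR_N_le). assert (H0 := sqrt_pos (INR N)).
  assert (Hinv : 0 < / INR N) by (apply Rinv_0_lt_compat; lra).
  replace (sqrt (INR N) * (1 / (4 * INR N))) with (sqrt (INR N) * / INR N / 4) by (field; lra).
  assert (H1 : sqrt (INR N) * / INR N <= INR N * / INR N) by (apply Rmult_le_compat_r; lra).
  rewrite Rinv_r in H1 by lra.
  assert (0 <= sqrt (INR N) * / INR N) by (apply Rmult_le_pos; lra).
  lra.
Qed.

Lemma phiLip_Mconst : phiLip N La c1 c2 * Mconst N La c1 c2 = 1 / (4 * INR N).
Proof.
  assert (Hn := INR_N_pos). assert (Hp := phiLip_pos).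
  unfold Mconst. field. split; lra.
Qed.

Lemma Mconst_coefficients h kappa q :
  La ^ 2 * Mconst N La c1 c2 ^ 2 / (INR N * c1 ^ 2) * (1 + c2 / c1) ^ 2
    = (sqrt (INR N) * (1 / (4 * INR N))) ^ 2 /\
  La ^ 2 * Mconst N La c1 c2 ^ 2 / c1 ^ 2 * (1 + c2 / c1) ^ 2 = 1 / 16 /\
  8 * h * kappa * La * Mconst N La c1 c2 / c1 * q * (1 + c2 / c1) = 2 * (h * kappa) * q /\
  32 * h ^ 2 * kappa ^ 2 * La ^ 2 * Mconst N La c1 c2 ^ 2 / c1 ^ 2 * (1 + c2 / c1) ^ 2
    = 2 * (h * kappa) ^ 2.
Proof.
  assert (Hn := INR_N_pos). assert (Hc : 0 < c1 + c2) by lra.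
  assert (Hrate : La * Mconst N La c1 c2 / c1 * (1 + c2 / c1) = 1 / 4).
  { unfold Mconst, phiLip. field. repeat split; lra. }
  set (M := Mconst N La c1 c2) in *.
  repeat split.
  - rewrite Rpow_mult_distr, pow2_sqrt by lra.
    transitivity ((La * M / c1 * (1 + c2 / c1)) ^ 2 / INR N); [field; lra|].
    rewrite Hrate. field. lra.
  - transitivity ((La * M / c1 * (1 + c2 / c1)) ^ 2); [field; lra|].
    rewrite Hrate. field.
  - transitivity (8 * (h * kappa) * q * (La * M / c1 * (1 + c2 / c1))); [field; lra|].
    rewrite Hrate. field.
  - transitivity (32 * (h * kappa) ^ 2 * (La * M / c1 * (1 + c2 / c1)) ^ 2); [field; lra|].
    rewrite Hrate. field.
Qed.

Section Dynamics.
Variables (kappa h : R).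
Hypothesis Hkappa : 0 < kappa.
Hypothesis Hh0 : 0 < h.
Hypothesis Hhk : h < 1 / kappa.

Lemma hkappa_lt_1 : h * kappa < 1.
Proof.
  assert (H : h * kappa < 1 / kappa * kappa) by (apply Rmult_lt_compat_r; auto).
  replace (1 / kappa * kappa) with 1 in H by (field; lra). exact H.
Qed.

Lemma velocity_update y z n i k :
  MT_solution N d kappa h a y z -> (i < N)%nat -> (k < d)%nat ->
  z (S n) i k = (1 - h * kappa) * z n i k + h * kappa * phi_avg N d a y n (z n) i k.
Proof.
  intros Hs Hi Hk. destruct (Hs n i k Hi Hk) as [_ ->]. unfold phi_avg.
  rewrite (sumN_ext _ _ (fun l => phi N d a y n i l * z n l k - z n i k * phi N d a y n i l))
    by (intros; ring).
  rewrite sumN_minus, sumN_scal, phi_row_sum. ring.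
Qed.

Lemma frobD_position_step y z n :
  MT_solution N d kappa h a y z -> frobD N d y (S n) <= frobD N d y n + h * frobD N d z n.
Proof.
  intros Hs. rewrite !frobD_frob3.
  rewrite (frob3_ext_lt N d _ (fun i j k => (y n i k - y n j k) + h * (z n i k - z n j k))).
  - eapply Rle_trans; [apply frob3_minkowski|]. rewrite frob3_scal, Rabs_right by lra. lra.
  - intros i j k Hi Hj Hk. destruct (Hs n i k Hi Hk) as [-> _].
    destruct (Hs n j k Hj Hk) as [-> _]. ring.
Qed.

Lemma frobD_velocity_step y z n :
  MT_solution N d kappa h a y z ->
  frobD N d z (S n) <= (1 - h * kappa) * frobD N d z n
     + h * kappa * (sqrt (INR N) * phiLip N La c1 c2 * frobD N d y n * frobD N d z n).
Proof.
  intros Hs. assert (Hu := hkappa_lt_1).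
  rewrite (frobD_frob3 N d z (S n)).
  rewrite (frob3_ext_lt N d _ (fun i j k => (1 - h * kappa) * (z n i k - z n j k)
       + h * kappa * (phi_avg N d a y n (z n) i k - phi_avg N d a y n (z n) j k))).
  - eapply Rle_trans; [apply frob3_minkowski|]. rewrite !frob3_scal, !Rabs_right by nra.
    rewrite <- frobD_frob3. apply Rplus_le_compat_l, Rmult_le_compat_l; [nra|].
    eapply Rle_trans; [apply frob3_phi_avg_rows_le|].
    rewrite spread_total_frobD, sqrt_pow2 by apply frobD_nonneg. lra.
  - intros i j k Hi Hj Hk. rewrite !(velocity_update y z n) by auto. ring.
Qed.

Lemma velocity_diff_update x v xb vb n i j k :
  MT_solution N d kappa h a x v -> MT_solution N d kappa h a xb vb ->
  (i < N)%nat -> (j < N)%nat -> (k < d)%nat ->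
  (v (S n) i k - v (S n) j k) - (vb (S n) i k - vb (S n) j k)
  = (1 - h * kappa) * ((v n i k - v n j k) - (vb n i k - vb n j k))
    + h * kappa * (phi_avg N d a xb n (fun l k => v n l k - vb n l k) i k
                   - phi_avg N d a xb n (fun l k => v n l k - vb n l k) j k)
    + h * kappa * ((phi_avg N d a x n (v n) i k - phi_avg N d a xb n (v n) i k)
                   - (phi_avg N d a x n (v n) j k - phi_avg N d a xb n (v n) j k)).
Proof.
  intros Hs Hsb Hi Hj Hk.
  rewrite !(velocity_update x v n), !(velocity_update xb vb n), !phi_avg_minus by auto. ring.
Qed.

Lemma frobDD_step x v xb vb n R0 :
  MT_solution N d kappa h a x v -> MT_solution N d kappa h a xb vb ->
  frobD N d x n <= R0 -> frobD N d xb n <= R0 ->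
  frobDD N d v vb (S n)
  <= (1 - h * kappa + h * kappa * (sqrt (INR N) * (phiLip N La c1 c2 * R0))) * frobDD N d v vb n
     + h * kappa * (2 * INR N * (phiLip N La c1 c2 * R0)) * frobD N d v n.
Proof.
  intros Hs Hsb HX HXb. assert (Hu := hkappa_lt_1). assert (HLp := phiLip_pos).
  assert (HR : forall i m, (i < N)%nat -> (m < N)%nat -> dist_ij d x n i m <= R0)
    by (intros; eapply Rle_trans; [apply dist_ij_le_frobD | ]; eauto).
  assert (HRb : forall i m, (i < N)%nat -> (m < N)%nat -> dist_ij d xb n i m <= R0)
    by (intros; eapply Rle_trans; [apply dist_ij_le_frobD | ]; eauto).
  rewrite (frobDD_frob3 N d v vb (S n)), (frob3_ext_lt N d _ _ (fun i j k =>
    velocity_diff_update x v xb vb n i j k Hs Hsb)).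
  eapply Rle_trans; [apply frob3_minkowski|].
  eapply Rle_trans; [apply Rplus_le_compat_r, frob3_minkowski|].
  rewrite !frob3_scal, !Rabs_right by nra. rewrite <- frobDD_frob3.
  assert (HG := frob3_phi_avg_rows_le xb n (fun l k => v n l k - vb n l k)).
  assert (HB := frob3_phi_avg_configs_le x xb n (v n) R0 HR HRb).
  rewrite spread_total_frobDD, sqrt_pow2 in HG by apply frobDD_nonneg.
  rewrite spread_total_frobD, sqrt_pow2 in HB by apply frobD_nonneg.
  assert (HG' : sqrt (INR N) * phiLip N La c1 c2 * frobD N d xb n * frobDD N d v vb n
                <= sqrt (INR N) * (phiLip N La c1 c2 * R0) * frobDD N d v vb n).
  { rewrite <- !Rmult_assoc. apply Rmult_le_compat_r; [apply frobDD_nonneg|].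
    apply Rmult_le_compat_l; auto. apply Rmult_le_pos; [apply sqrt_pos | lra]. }
  assert (Hpos : 0 <= h * kappa) by nra.
  assert (H1 := Rmult_le_compat_l _ _ _ Hpos (Rle_trans _ _ _ HG HG')).
  assert (H2 := Rmult_le_compat_l _ _ _ Hpos HB).
  lra.
Qed.

Lemma flocking_bound y z :
  MT_solution N d kappa h a y z ->
  frobD N d y 0 < Mconst N La c1 c2 ->
  frobD N d z 0 < kappa * RInt (psi N La c1 c2) (frobD N d y 0) (Mconst N La c1 c2) ->
  forall n, frobD N d y n < Mconst N La c1 c2.
Proof.
  intros Hs HX0 HV0.
  assert (Hn := INR_N_pos). assert (HLp := phiLip_pos).
  set (c := phiLip N La c1 c2 * INR N).
  assert (HcM : c * Mconst N La c1 c2 = 1 / 4).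
  { unfold c. rewrite Rmult_comm, <- Rmult_assoc, (Rmult_comm (Mconst N La c1 c2)), phiLip_Mconst.
    field; lra. }
  set (M := Mconst N La c1 c2) in *.
  assert (Hinv : forall n, frobD N d y n < M /\
            frobD N d z n + kappa * psi_primitive c (frobD N d y n) < kappa * psi_primitive c M).
  { induction n as [|n [HX HL]].
    - split; auto. rewrite RInt_psi in HV0. fold c M in HV0. lra.
    - assert (HV := frobD_velocity_step y z n Hs).
      assert (Hgain : sqrt (INR N) * phiLip N La c1 c2 * frobD N d y n * frobD N d z n
                      <= c * frobD N d y n * frobD N d z n).
      { unfold c. rewrite !(Rmult_assoc _ (frobD N d y n)).
        apply Rmult_le_compat_r;
          [apply Rmult_le_pos; apply frobD_nonneg | rewrite Rmult_comm; apply Rmult_le_compat_l].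
        - lra.
        - apply sqrt_INR_N_le. }
      apply (lyapunov_step c kappa h M (frobD N d y n) (frobD N d z n)); auto;
        try apply frobD_nonneg.
      + unfold c; nra.
      + apply hkappa_lt_1.
      + apply frobD_position_step, Hs.
      + eapply Rle_trans; [exact HV|].
        apply Rplus_le_compat_l, Rmult_le_compat_l; [nra | exact Hgain]. }
  intros n. apply Hinv.
Qed.

Lemma frobDD_step_in_flock x v xb vb n :
  MT_solution N d kappa h a x v -> MT_solution N d kappa h a xb vb ->
  Rmax (frobD N d x 0) (frobD N d xb 0) < Mconst N La c1 c2 ->
  frobD N d v 0 < kappa * RInt (psi N La c1 c2) (frobD N d x 0) (Mconst N La c1 c2) ->
  frobD N d vb 0 < kappa * RInt (psi N La c1 c2) (frobD N d xb 0) (Mconst N La c1 c2) ->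
  frobDD N d v vb (S n)
  <= (1 - h * kappa + h * kappa * (sqrt (INR N) * (1 / (4 * INR N)))) * frobDD N d v vb n
     + h * kappa * frobD N d v n / 2.
Proof.
  intros Hs Hsb Hx0 Hv0 Hvb0. assert (Hn := INR_N_pos).
  assert (HX := flocking_bound x v Hs (Rle_lt_trans _ _ _ (Rmax_l _ _) Hx0) Hv0 n).
  assert (HXb := flocking_bound xb vb Hsb (Rle_lt_trans _ _ _ (Rmax_r _ _) Hx0) Hvb0 n).
  eapply Rle_trans; [apply (frobDD_step x v xb vb n _ Hs Hsb (Rlt_le _ _ HX) (Rlt_le _ _ HXb))|].
  rewrite phiLip_Mconst. right. field. lra.
Qed.

End Dynamics.
End Weights.

(** * The quadratic estimate *)

Lemma square_linear_bound u q s C1 E V Y :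
  0 < u < 1 -> 1 - u <= q <= 1 -> 0 <= s <= 1 / 4 -> 0 <= E -> 0 <= V -> 0 <= Y ->
  q ^ 2 + 4 * u ^ 2 * s ^ 2 + u * q / 2 <= C1 ->
  Y <= (1 - u + u * s) * E + u * V / 2 ->
  Y ^ 2 <= C1 * E ^ 2 + 2 * u * q * E * V + 2 * u ^ 2 * V ^ 2.
Proof.
  intros Hu Hq Hs HE HV HY HC1 HYb.
  set (K := 1 - u + u * s).
  assert (HKC : K ^ 2 + 3 * u ^ 2 * s ^ 2 <= C1).
  { assert ((1 - u) ^ 2 <= q ^ 2) by nra.
    assert (2 * (1 - u) * s <= q / 2) by nra.
    assert (u * (2 * (1 - u) * s) <= u * (q / 2)) by (apply Rmult_le_compat_l; lra).
    unfold K. nra. }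
  assert (HYsq : Y ^ 2 <= (K * E + u * V / 2) ^ 2).
  { apply pow_incr. split; [exact HY | exact HYb]. }
  assert (Hcross : K * (u * E * V) <= (2 * q + u * s) * (u * E * V)).
  { apply Rmult_le_compat_r; [apply Rmult_le_pos; [nra | exact HV] | unfold K; lra]. }
  (* AM-GM: [s E V <= 3 s^2 E^2 + V^2 / 12] *)
  assert (Hamgm : u ^ 2 * (s * E * V) <= u ^ 2 * (3 * s ^ 2 * E ^ 2 + V ^ 2 / 12)).
  { apply Rmult_le_compat_l; [apply pow2_ge_0|].
    assert (0 <= (s * E - V / 6) ^ 2) by apply pow2_ge_0. nra. }
  assert (HCE : (K ^ 2 + 3 * u ^ 2 * s ^ 2) * E ^ 2 <= C1 * E ^ 2)
    by (apply Rmult_le_compat_r; [apply pow2_ge_0 | exact HKC]).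
  assert (0 <= u ^ 2 * V ^ 2) by (apply Rmult_le_pos; apply pow2_ge_0).
  lra.
Qed.

Lemma C1_lower_bound h kappa q s alp :
  0 <= h * kappa -> 0 <= q -> 0 <= alp ->
  q ^ 2 + 4 * (h * kappa) ^ 2 * s ^ 2 + h * kappa * q / 2
  <= q ^ 2 + 4 * h ^ 2 * kappa ^ 2 * (alp + s ^ 2)
     + 2 * sqrt 2 * h * kappa * q * sqrt (alp + 1 / 16).
Proof.
  intros Hu Hq Halp.
  assert (H2 : 1 <= sqrt 2) by (rewrite <- sqrt_1; apply sqrt_le_1_alt; lra).
  assert (Ha : 1 / 4 <= sqrt (alp + 1 / 16)).
  { rewrite <- (sqrt_pow2 (1 / 4)) by lra. apply sqrt_le_1_alt. lra. }
  assert (1 / 4 <= sqrt 2 * sqrt (alp + 1 / 16)) by nra.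
  assert (h * kappa * q / 2 <= 2 * (h * kappa * q) * (sqrt 2 * sqrt (alp + 1 / 16)))
    by (assert (0 <= h * kappa * q) by nra; nra).
  assert (0 <= (h * kappa) ^ 2 * alp) by (apply Rmult_le_pos; [apply pow2_ge_0 | exact Halp]).
  nra.
Qed.

Theorem proposition4p2
  (N d : nat) (kappa h c1 c2 La : R) (a : R -> R)
  (x v xb vb : nat -> nat -> nat -> R)
  (HN : (1 <= N)%nat) (Hd : (1 <= d)%nat)
  (Hkappa : 0 < kappa) (Hh0 : 0 < h) (Hh1 : h < 1) (Hhk : h < 1 / kappa)
  (Hc1 : 0 < c1) (Hc12 : c1 <= c2) (HLa : 0 < La)
  (Ha_bnd : forall r, 0 <= r -> c1 <= a r <= c2)
  (Ha_lip : forall r1 r2, 0 <= r1 -> 0 <= r2 -> Rabs (a r1 - a r2) <= La * Rabs (r1 - r2))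
  (Hsol : MT_solution N d kappa h a x v)
  (Hsolb : MT_solution N d kappa h a xb vb)
  (Hx0 : Rmax (frobD N d x 0) (frobD N d xb 0) < Mconst N La c1 c2)
  (Hv0 : frobD N d v 0 <
         kappa * RInt (psi N La c1 c2) (frobD N d x 0) (Mconst N La c1 c2))
  (Hvb0 : frobD N d vb 0 <
          kappa * RInt (psi N La c1 c2) (frobD N d xb 0) (Mconst N La c1 c2)) :
  forall n : nat,
    let M := Mconst N La c1 c2 in
    let lam := lambda_n N d a xb n in
    let alp := alpha_n N d a xb n in
    let C1 := (1 - h * kappa * lam) ^ 2
      + 4 * h ^ 2 * kappa ^ 2
          * (alp + La ^ 2 * M ^ 2 / (INR N * c1 ^ 2) * (1 + c2 / c1) ^ 2)
      + 2 * sqrt 2 * h * kappa * (1 - h * kappa * lam)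
          * sqrt (alp + La ^ 2 * M ^ 2 / c1 ^ 2 * (1 + c2 / c1) ^ 2) in
    let C2 := 8 * h * kappa * La * M / c1 * (1 - h * kappa * lam) * (1 + c2 / c1) in
    let C3 := 32 * h ^ 2 * kappa ^ 2 * La ^ 2 * M ^ 2 / c1 ^ 2 * (1 + c2 / c1) ^ 2 in
    frobDD N d v vb (S n) ^ 2
      <= C1 * frobDD N d v vb n ^ 2
         + C2 * frobDD N d v vb n * frobD N d v n
         + C3 * frobD N d v n ^ 2.
Proof.
  intros n M lam alp C1 C2 C3.
  destruct (Nat.eq_dec N 1) as [->|HN1].
  { rewrite !frobDD_one_agent, !frobD_one_agent. right; ring. }
  assert (Hu : 0 < h * kappa < 1) by (split; [nra | apply hkappa_lt_1; auto]).
  assert (Hlam : 0 <= lam <= 1) by (apply (lambda_n_bounds N d c1 c2 a); auto; lia).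
  destruct (Mconst_coefficients N c1 c2 La HN Hc1 Hc12 HLa h kappa (1 - h * kappa * lam))
    as (E1 & E2 & E3 & E4).
  unfold C1, C2, C3, M. rewrite E1, E2, E3, E4.
  apply (square_linear_bound (h * kappa) (1 - h * kappa * lam) (sqrt (INR N) * (1 / (4 * INR N))));
    try apply frobDD_nonneg; try apply frobD_nonneg.
  - exact Hu.
  - split; nra.
  - apply (sqrt_INR_N_div_bounds N HN).
  - apply C1_lower_bound; [nra | nra | apply alpha_n_nonneg].
  - apply (frobDD_step_in_flock N d c1 c2 La a HN Hc1 Hc12 HLa Ha_bnd Ha_lip kappa h Hkappa Hh0 Hhk
              x v xb vb n Hsol Hsolb Hx0 Hv0 Hvb0).
Qed.
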